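(* Let $\mathfrak{plc}_I$ be a tropical plactic algebra with totally ordered set of generators $\{\mathfrak a_i : i\in I\}$. Then for all generators $\mathfrak a,\mathfrak b,\mathfrak c$: (KN1) $\mathfrak a\,\mathfrak c\,\mathfrak b=\mathfrak c\,\mathfrak a\,\mathfrak b$ whenever $\mathfrak a\le \mathfrak b<\mathfrak c$; (KN2) $\mathfrak b\,\mathfrak a\,\mathfrak c=\mathfrak b\,\mathfrak c\,\mathfrak a$ whenever $\mathfrak a<\mathfrak b\le \mathfrak c$. Consequently, the multiplicative monoid of $\mathfrak{plc}_I$ satisfies the plactic (Knuth) relations on its generators, i.e. the monoid morphism from the free monoid on the ordered alphabet $\{\mathfrak a_i\}$ to $(\mathfrak{plc}_I,\cdot)$ factors through the plactic monoid.
   Context: A tropical plactic algebra (troplactic algebra) $\mathfrak{plc}_I$ ($I\subseteq\mathbb N$ nonempty) is an idempotent semiring $(\mathfrak{plc}_I,+,\cdot)$ (addition commutative, associative, with $\mathfrak u+\mathfrak u=\mathfrak u$ for all $\mathfrak u$; multiplication associative, possibly noncommutative, with identity $\mathfrak e$; a zero $\mathfrak o$ which is the additive identity and multiplicatively absorbing; multiplication distributes over addition on both sides), generated as a semiring by a totally ordered set of elements $\{\mathfrak a_i: i\in I\}$, such that for all generators $\mathfrak a\le\mathfrak b\le\mathfrak c$: (TPA1) $\mathfrak a=\mathfrak e+\mathfrak a$; (TPA2) $\mathfrak b\mathfrak a=\mathfrak a+\mathfrak b$ when $\mathfrak b>\mathfrak a$; (TPA3) $\mathfrak a(\mathfrak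 b+\mathfrak c)=\mathfrak a\mathfrak b+\mathfrak c$; (TPA4) $(\mathfrak a+\mathfrak b)\mathfrak c=\mathfrak a+\mathfrak b\mathfrak c$. The plactic monoid on an ordered alphabet is the free monoid modulo the congruence generated by the Knuth relations $xzy=zxy$ ($x\le y<z$) and $yxz=yzx$ ($x<y\le z$). *)

From HB Require Import structures.
From mathcomp Require Import all_boot all_order all_algebra.
Set Implicit Arguments. Unset Strict Implicit. Unset Printing Implicit Defensive.
Import GRing.Theory.
Local Open Scope ring_scope.

Inductive gen_by (R : pzSemiRingType) (I : pred nat) (a : nat -> R) : R -> Prop :=
  | gen_zero : gen_by I a 0
  | gen_one : gen_by I a 1
  | gen_gen i : I i -> gen_by I a (a i)
  | gen_add x y : gen_by I a x -> gen_by I a y -> gen_by I a (x + y)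
  | gen_mul x y : gen_by I a x -> gen_by I a y -> gen_by I a (x * y).

Definition is_troplactic (R : pzSemiRingType) (I : pred nat) (a : nat -> R) : Prop :=
  [/\ exists i, I i,
      (forall u : R, u + u = u),
      (forall u : R, gen_by I a u) &
  [/\
      (forall i, I i -> a i = 1 + a i),
      (forall i j, I i -> I j -> (i < j)%N -> a j * a i = a i + a j),
      (forall i j k, I i -> I j -> I k -> (i <= j <= k)%N ->
                   a i * (a j + a k) = a i * a j + a k)
    & (forall i j k, I i -> I j -> I k -> (i <= j <= k)%N ->
                   (a i + a j) * a k = a i + a j * a k)]].

Inductive plactic_eq : seq nat -> seq nat -> Prop :=
  | pl_refl w : plactic_eq w w
  | pl_sym w1 w2 : plactic_eq w1 w2 -> plactic_eq w2 w1
  | pl_trans w1 w2 w3 : plactic_eq w1 w2 -> plactic_eq w2 w3 -> plactic_eq w1 w3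
  | pl_knuth1 u v x y z : (x <= y < z)%N ->
      plactic_eq (u ++ [:: x; z; y] ++ v) (u ++ [:: z; x; y] ++ v)
  | pl_knuth2 u v x y z : (x < y <= z)%N ->
      plactic_eq (u ++ [:: y; x; z] ++ v) (u ++ [:: y; z; x] ++ v).

Definition word_eval (R : pzSemiRingType) (a : nat -> R) (w : seq nat) : R :=
  \prod_(i <- w) a i.

From HB Require Import structures.
From mathcomp Require Import all_boot all_order all_algebra.
Set Implicit Arguments. Unset Strict Implicit. Unset Printing Implicit Defensive.
Local Open Scope ring_scope.
Import GRing.Theory.

(* Both Knuth relations are three-line computations: TPA2 turns the descent
   inside each word into a sum, TPA3 (resp. TPA4) distributes the remaining
   generator, and TPA1 lets a product of two generators absorb either factor. *)

Lemma plactic_eq_all (I : pred nat) (w1 w2 : seq nat) :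
  plactic_eq w1 w2 -> all I w1 = all I w2.
Proof.
elim=> {w1 w2} // [w1 w2 w3 _ -> _ -> //|u v x y z _|u v x y z _];
  apply: perm_all; rewrite perm_cat2l perm_cat2r.
- by rewrite (perm_catCA [:: x] [:: z] [:: y]).
- by rewrite perm_cons (perm_catC [:: x] [:: z]).
Qed.

Lemma word_eval_cat3 (R : pzSemiRingType) (a : nat -> R) (u s v : seq nat) :
  word_eval a (u ++ s ++ v) = word_eval a u * word_eval a s * word_eval a v.
Proof. by rewrite /word_eval !big_cat /= mulrA. Qed.

Lemma word_eval3 (R : pzSemiRingType) (a : nat -> R) (x y z : nat) :
  word_eval a [:: x; y; z] = a x * a y * a z.
Proof. by rewrite /word_eval !big_cons big_nil mulr1 mulrA. Qed.

Section PlacticFactorisation.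

Variables (R : pzSemiRingType) (I : pred nat) (a : nat -> R).

Hypothesis knuth1 : forall i j k, I i -> I j -> I k -> (i <= j < k)%N ->
  a i * a k * a j = a k * a i * a j.
Hypothesis knuth2 : forall i j k, I i -> I j -> I k -> (i < j <= k)%N ->
  a j * a i * a k = a j * a k * a i.

Lemma word_eval_plactic (w1 w2 : seq nat) :
  all I w1 -> plactic_eq w1 w2 -> word_eval a w1 = word_eval a w2.
Proof.
move=> Iw1 w12; elim: w12 Iw1 => {w1 w2} //.
- by move=> w1 w2 w12 IH Iw2; rewrite IH // (plactic_eq_all I w12).
- move=> w1 w2 w3 w12 IH12 _ IH23 Iw1.
  by rewrite IH12 // IH23 // -(plactic_eq_all I w12).
- move=> u v x y z xyz; rewrite !all_cat => /and3P[_ /and4P[Ix Iz Iy _] _].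
  (* [!word_eval_cat3] would loop: a literal word unifies with [_ ++ _ ++ _]. *)
  by rewrite 2!word_eval_cat3 !word_eval3 knuth1.
- move=> u v x y z xyz; rewrite !all_cat => /and3P[_ /and4P[Iy Ix Iz _] _].
  by rewrite 2!word_eval_cat3 !word_eval3 knuth2.
Qed.

End PlacticFactorisation.

Section TroplacticKnuth.

Variables (R : pzSemiRingType) (I : pred nat) (a : nat -> R).

Hypothesis tpa1 : forall i, I i -> a i = 1 + a i.
Hypothesis tpa2 : forall i j, I i -> I j -> (i < j)%N -> a j * a i = a i + a j.
Hypothesis tpa3 : forall i j k, I i -> I j -> I k -> (i <= j <= k)%N ->
  a i * (a j + a k) = a i * a j + a k.
Hypothesis tpa4 : forall i j k, I i -> I j -> I k -> (i <= j <= k)%N ->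
  (a i + a j) * a k = a i + a j * a k.

Lemma troplactic_mul_absorbl i j : I i -> a j + a i * a j = a i * a j.
Proof. by move=> Ii; rewrite [in RHS](tpa1 Ii) mulrDl mul1r. Qed.

Lemma troplactic_mul_absorbr i j : I j -> a i + a i * a j = a i * a j.
Proof. by move=> Ij; rewrite [in RHS](tpa1 Ij) mulrDr mulr1. Qed.

Lemma troplactic_knuth1 i j k : I i -> I j -> I k -> (i <= j < k)%N ->
  a i * a k * a j = a k * a i * a j.
Proof.
move=> Ii Ij Ik /andP[le_ij lt_jk]; have lt_ik := leq_ltn_trans le_ij lt_jk.
rewrite -mulrA (tpa2 Ij Ik lt_jk) (tpa3 Ii Ij Ik); last by rewrite le_ij ltnW.
rewrite (tpa2 Ii Ik lt_ik) mulrDl (tpa2 Ij Ik lt_jk) addrA [_ + a j]addrC.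
by rewrite (troplactic_mul_absorbl j Ii).
Qed.

Lemma troplactic_knuth2 i j k : I i -> I j -> I k -> (i < j <= k)%N ->
  a j * a i * a k = a j * a k * a i.
Proof.
move=> Ii Ij Ik /andP[lt_ij le_jk]; have lt_ik := leq_trans lt_ij le_jk.
rewrite (tpa2 Ii Ij lt_ij) (tpa4 Ii Ij Ik); last by rewrite ltnW.
rewrite -mulrA (tpa2 Ii Ik lt_ik) mulrDr (tpa2 Ii Ij lt_ij) -addrA.
by rewrite (troplactic_mul_absorbr j Ik).
Qed.

End TroplacticKnuth.

Theorem mainTheorem1 (R : pzSemiRingType) (I : pred nat) (a : nat -> R) :
  is_troplactic I a ->
  [/\ (* KN1 *) (forall i j k, I i -> I j -> I k -> (i <= j < k)%N ->
                  a i * a k * a j = a k * a i * a j),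
      (* KN2 *) (forall i j k, I i -> I j -> I k -> (i < j <= k)%N ->
                  a j * a i * a k = a j * a k * a i)
    & (* factorisation through the plactic monoid *)
      (forall w1 w2 : seq nat, all I w1 -> all I w2 -> plactic_eq w1 w2 ->
         word_eval a w1 = word_eval a w2)].
Proof.
case=> _ _ _ [tpa1 tpa2 tpa3 tpa4].
have kn1 := troplactic_knuth1 tpa1 tpa2 tpa3.
have kn2 := troplactic_knuth2 tpa1 tpa2 tpa4.
split=> // w1 w2 Iw1 _; exact: word_eval_plactic kn1 kn2 w1 w2 Iw1.
Qed.
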